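(* In the dynamic stochastic block model with noise-free ULSE-n1 embeddings $\tilde{\mathbf{Y}}^{(t)}$ described in the context, for all $i,j\in[n]$ and $t,u\in[T]$: (i) if $\mathbf{P}^{(t)}_{i:}=\mathbf{P}^{(t)}_{j:}$ then $\tilde{\mathbf{Y}}^{(t)}_{i:}=\tilde{\mathbf{Y}}^{(t)}_{j:}$; (ii) if $\mathbf{P}^{(t)}_{i:}=\mathbf{P}^{(u)}_{i:}$ and $\tilde{\mathbf{D}}^{(t)}=\tilde{\mathbf{D}}^{(u)}$ then $\tilde{\mathbf{Y}}^{(t)}_{i:}=\tilde{\mathbf{Y}}^{(u)}_{i:}$.
   Context: Setting: $n$ nodes with labels $z_i\in[K]$, symmetric $\mathbf{B}^{(1)},\dots,\mathbf{B}^{(T)}\in[0,1]^{K\times K}$ with all entries positive, $\rho\in(0,1]$, and edge probability matrices $P^{(t)}_{ij}=\rho B^{(t)}_{z_iz_j}$; $\mathbf{P}^{(t)}_{i:}$ denotes the $i$-th row. Noise-free degrees $\tilde d^{(t)}_i=\sum_jP^{(t)}_{ij}$, $\tilde{\mathbf{D}}^{(t)}=\mathrm{diag}(\tilde d^{(t)}_1,\dots,\tilde d^{(t)}_n)$. Noise-free ULSE-n1 with $d=K-1$: $\tilde{\mathbf{L}}^{(t)}=\mathbf{I}_n-\tilde{\mathbf{D}}^{(t)-1/2}\mathbf{P}^{(t)}\tilde{\mathbf{D}}^{(t)-1/2}$, $\tilde{\mathbf{L}}=[\tilde{\mathbf{L}}^{(1)}\mid\cdots\mid\tilde{\mathbf{L}}^{(T)}]\in\mathbb{R}^{n\times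 nT}$ with singular values $\tilde\sigma_1\le\cdots\le\tilde\sigma_n$; $\tilde{\mathbf{\Sigma}}=\mathrm{diag}(\tilde\sigma_2,\dots,\tilde\sigma_K)$, assumed invertible; $\tilde{\mathbf{U}}\in\mathbb{R}^{n\times d}$, $\tilde{\mathbf{V}}\in\mathbb{R}^{nT\times d}$ with orthonormal columns satisfying $\tilde{\mathbf{L}}\tilde{\mathbf{V}}=\tilde{\mathbf{U}}\tilde{\mathbf{\Sigma}}$, $\tilde{\mathbf{L}}^\top\tilde{\mathbf{U}}=\tilde{\mathbf{V}}\tilde{\mathbf{\Sigma}}$; $\tilde{\mathbf{V}}^{(t)}$ the $t$-th block of $n$ rows of $\tilde{\mathbf{V}}$; and $\tilde{\mathbf{Y}}^{(t)}=\tilde{\mathbf{V}}^{(t)}\tilde{\mathbf{\Sigma}}^{1/2}-\tilde{\mathbf{U}}\tilde{\mathbf{\Sigma}}^{-1/2}$. *)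

From HB Require Import structures.
From mathcomp Require Import all_boot all_order all_algebra.
Set Implicit Arguments. Unset Strict Implicit. Unset Printing Implicit Defensive.
Import Order.TTheory GRing.Theory Num.Theory.
Local Open Scope ring_scope.

Section DSBM.
Variables (R : rcfType) (n K T : nat).

(* number of rows of the column-stacked matrix V~ : n*T written as a block sum *)
Definition nT : nat := (\sum_(t < T) n)%N.

Definition Pmx (rho : R) (B : 'I_T -> 'M[R]_K) (z : 'I_n -> 'I_K) (t : 'I_T)
  : 'M[R]_n := \matrix_(i, j) (rho * B t (z i) (z j)).

Definition deg (P : 'M[R]_n) (i : 'I_n) : R := \sum_(j < n) P i j.
Definition Dmx (P : 'M[R]_n) : 'M[R]_n := diag_mx (\row_i deg P i).
Definition Dinvsqrt (P : 'M[R]_n) : 'M[R]_n :=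
  diag_mx (\row_i (Num.sqrt (deg P i))^-1).

Definition Lmx (P : 'M[R]_n) : 'M[R]_n :=
  1%:M - Dinvsqrt P *m P *m Dinvsqrt P.

Definition Ltilde (L : 'I_T -> 'M[R]_n) : 'M[R]_(n, nT) :=
  mxrow (q_ := fun _ : 'I_T => n) L.

Definition Vblock m (V : 'M[R]_(nT, m)) (t : 'I_T) : 'M[R]_(n, m) :=
  submxcol (p_ := fun _ : 'I_T => n) V t.

End DSBM.

(* sigma_0 <= ... <= sigma_{n-1} (0-based) are the singular values of the
   n x m matrix A in nondecreasing order: they are nonnegative, sorted, and
   A A^T = Q^T diag(sigma^2) Q for some orthogonal Q (i.e. sigma_i^2 are the
   eigenvalues of A A^T, with multiplicity). *)
Definition sorted_singular_values (R : rcfType) (n m : nat)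
  (A : 'M[R]_(n, m)) (sigma : 'I_n -> R) : Prop :=
  (forall i, 0 <= sigma i) /\
  (forall i j : 'I_n, (i <= j)%N -> sigma i <= sigma j) /\
  exists Q : 'M[R]_n, Q *m Q^T = 1%:M /\
    A *m A^T = Q^T *m diag_mx (\row_i (sigma i ^+ 2)) *m Q.

(* Sigma~ = diag(sigma_2,...,sigma_K) (1-based), i.e. 0-based indices 1..K-1 *)
(* sigma at a natural index (0 outside [0,n); only used with K <= n) *)
Definition sigma_at (R : rcfType) (n : nat) (sigma : 'I_n -> R) (k : nat) : R :=
  if insub k is Some i then sigma i else 0.
Definition Sigmad (R : rcfType) (n K : nat) (sigma : 'I_n -> R) (f : R -> R)
  : 'M[R]_(K.-1) := diag_mx (\row_(k < K.-1) f (sigma_at sigma k.+1)).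

From HB Require Import structures.
From mathcomp Require Import all_boot all_order all_algebra.
Set Implicit Arguments.
Unset Strict Implicit.
Unset Printing Implicit Defensive.
Import Order.TTheory GRing.Theory Num.Theory.
Local Open Scope ring_scope.

(* Since L^(t) is symmetric, the singular-vector relation L~^T U = V~ Sigma
   gives V^(t) Sigma = L^(t) U = U - D^(-1/2) P^(t) D^(-1/2) U, hence
   Y^(t) = - D^(-1/2) P^(t) W^(t) with W^(t) = D^(-1/2) U Sigma^(-1/2).
   Row i of Y^(t) is therefore - d_i^(-1/2) P^(t)_{i:} W^(t), which depends
   only on the row P^(t)_{i:} (which determines d_i) and on the degree matrix
   (which determines W^(t)). *)

Lemma divr_sqrtr (R : rcfType) (x : R) : 0 <= x -> x / Num.sqrt x = Num.sqrt x.
Proof.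
move=> x_ge0; have [->|sqrt_neq0] := eqVneq (Num.sqrt x) 0.
  by rewrite invr0 mulr0.
by rewrite -{1}(sqr_sqrtr x_ge0) expr2 mulfK.
Qed.

Lemma row_diag_mul (R : pzRingType) n m (d : 'rV[R]_n) (X : 'M[R]_(n, m)) i :
  row i (diag_mx d *m X) = d 0 i *: row i X.
Proof. by apply/rowP => k; rewrite mul_diag_mx !mxE. Qed.

Section NormalizedLaplacian.
Variables (R : rcfType) (n : nat).
Implicit Types P Q : 'M[R]_n.

Lemma deg_eq_row P i j : row i P = row j P -> deg P i = deg P j.
Proof.
move/rowP=> eq_ij; apply: eq_bigr => k _.
by have := eq_ij k; rewrite !mxE.
Qed.

Lemma deg_eq_Dmx P Q : Dmx P = Dmx Q -> deg P =1 deg Q.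
Proof. by move/matrixP=> eqD k; have := eqD k k; rewrite !mxE eqxx !mulr1n. Qed.

Lemma Dinvsqrt_eq P Q : Dmx P = Dmx Q -> Dinvsqrt P = Dinvsqrt Q.
Proof.
by move/deg_eq_Dmx=> eq_deg; congr diag_mx; apply/rowP => k; rewrite !mxE eq_deg.
Qed.

Lemma Lmx_sym P : P^T = P -> (Lmx P)^T = Lmx P.
Proof.
move=> P_sym; rewrite /Lmx linearB /= trmx1 !trmx_mul P_sym tr_diag_mx.
by rewrite mulmxA.
Qed.

Lemma row_Dinvsqrt_mul P m (M : 'M[R]_(n, m)) i :
  row i (Dinvsqrt P *m (P *m M)) = (Num.sqrt (deg P i))^-1 *: (row i P *m M).
Proof. by rewrite row_diag_mul row_mul mxE. Qed.

Lemma Lmx_embeddingE P k (X : 'M[R]_(n, k)) (U : 'M[R]_(n, k))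
    (S Shalf Sinvhalf : 'M[R]_k) :
  S *m Sinvhalf = Shalf -> X *m S = Lmx P *m U ->
  X *m Shalf - U *m Sinvhalf =
    - (Dinvsqrt P *m (P *m (Dinvsqrt P *m U *m Sinvhalf))).
Proof.
move=> <- XS; rewrite mulmxA XS /Lmx mulmxBl mul1mx mulmxBl.
by rewrite addrAC subrr add0r !mulmxA.
Qed.

End NormalizedLaplacian.

Lemma Pmx_sym (R : rcfType) (n K T : nat) (rho : R) (B : 'I_T -> 'M[R]_K)
    (z : 'I_n -> 'I_K) (t : 'I_T) :
  (forall t, (B t)^T = B t) -> (Pmx rho B z t)^T = Pmx rho B z t.
Proof.
move=> B_sym; apply/matrixP => a b; rewrite !mxE.
by have := B_sym t; move/matrixP/(_ (z b) (z a)); rewrite !mxE => ->.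
Qed.

Lemma Vblock_mul (R : rcfType) (n T k : nat) (L : 'I_T -> 'M[R]_n)
    (U : 'M[R]_(n, k)) (V : 'M[R]_(nT n T, k)) (S : 'M[R]_k) t :
  (Ltilde L)^T *m U = V *m S -> Vblock V t *m S = (L t)^T *m U.
Proof.
by move=> LtU; rewrite /Vblock submxcol_mul -LtU tr_mxrow mxcol_mul mxcolK.
Qed.

Lemma Sigmad_mul_sqrtV (R : rcfType) (n K : nat) (sigma : 'I_n -> R) :
  (forall i, 0 <= sigma i) ->
  Sigmad K sigma id *m Sigmad K sigma (fun x => (Num.sqrt x)^-1) =
    Sigmad K sigma Num.sqrt.
Proof.
move=> sigma_ge0; rewrite mulmx_diag; congr diag_mx; apply/rowP => k.
by rewrite !mxE divr_sqrtr // /sigma_at; case: insub.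
Qed.

Theorem theorem3 (R : rcfType) (n K T : nat) (z : 'I_n -> 'I_K)
  (B : 'I_T -> 'M[R]_K) (rho : R)
  (sigma : 'I_n -> R) (U : 'M[R]_(n, K.-1)) (V : 'M[R]_(nT n T, K.-1)) :
  (forall t, (B t)^T = B t) ->
  (forall t a b, 0 < B t a b <= 1) ->
  0 < rho <= 1 ->
  (K <= n)%N ->
  let P := Pmx rho B z in
  let Lt := Ltilde (fun t => Lmx (P t)) in
  sorted_singular_values Lt sigma ->
  let Sig := Sigmad K sigma id in
  Sig \in unitmx ->
  U^T *m U = 1%:M ->
  V^T *m V = 1%:M ->
  Lt *m V = U *m Sig ->
  Lt^T *m U = V *m Sig ->
  let Y := fun t : 'I_T =>
    Vblock V t *m Sigmad K sigma Num.sqrt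
    - U *m Sigmad K sigma (fun x => (Num.sqrt x)^-1) in
  forall (i j : 'I_n) (t u : 'I_T),
    (row i (P t) = row j (P t) -> row i (Y t) = row j (Y t)) /\
    (row i (P t) = row i (P u) -> Dmx (P t) = Dmx (P u) ->
       row i (Y t) = row i (Y u)).
Proof.
move=> B_sym _ _ _ P Lt [sigma_ge0 _] Sig _ _ _ _ LtU Y i j t u.
have VSig t0 : Vblock V t0 *m Sig = Lmx (P t0) *m U.
  by rewrite (Vblock_mul _ LtU) Lmx_sym // Pmx_sym.
pose W t := Dinvsqrt (P t) *m U *m Sigmad K sigma (fun x => (Num.sqrt x)^-1).
have rowY k t0 :
    row k (Y t0) = - ((Num.sqrt (deg (P t0) k))^-1 *: (row k (P t0) *m W t0)).
  rewrite /Y (Lmx_embeddingE (Sigmad_mul_sqrtV K sigma_ge0) (VSig t0)).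
  by rewrite linearN /= row_Dinvsqrt_mul.
split=> [eq_ij | eq_tu eqD].
  by rewrite !rowY (deg_eq_row eq_ij) eq_ij.
have eqW : W t = W u by rewrite /W (Dinvsqrt_eq eqD).
by rewrite !rowY eq_tu eqW (deg_eq_Dmx eqD).
Qed.
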